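(* Let an ordered storyline instance be given and let $\Delta,\overline{\Delta}\in\mathbb{N}$. Consider the polyhedron $P$ in the variables $y_{t,c}$ ($t\in[\ell]$, $c\in\mathrm{Ac}(t)$) and $w_{t,c}$ ($t\in[\ell-1]$, $c\in\mathrm{Ac}(t)\cap\mathrm{Ac}(t+1)$) defined by the constraints: $y_{t,c'}-y_{t,c}=\Delta$ for all $t\in[\ell]$ and $(c,c')\in N_{\mathcal{M}}(t)$; $y_{t,c'}-y_{t,c}\ge\overline{\Delta}$ for all $t\in[\ell]$ and $(c,c')\in N_A(t)$; $y_{t,c}-y_{t+1,c}\le w_{t,c}$ and $y_{t+1,c}-y_{t,c}\le w_{t,c}$ for all $t\in[\ell-1]$, $c\in\mathrm{Ac}(t)\cap\mathrm{Ac}(t+1)$; and $y_{t,c}\ge 0$ for all $t\in[\ell]$, $c\in\mathrm{Ac}(t)$. Then every extreme point of $P$ is integral.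
   Context: Write $[n]=\{1,\dots,n\}$. An ordered storyline instance consists of characters $\mathcal{C}$, time steps $[\ell]$, meetings $\mathcal{M}$ (each meeting $M$ has a time step $\mathrm{tm}(M)$ and character set $\mathrm{char}(M)$), for each character $c$ a set $A(c)$ of consecutive active time steps, and for each $t$ a permutation $\pi_t$ of the active characters $\mathrm{Ac}(t)=\{c: t\in A(c)\}$ in which the characters of each meeting at time $t$ are consecutive; $c\prec_t c'$ means $c$ precedes $c'$ in $\pi_t$. For $t\in[\ell]$: $N(t)$ is the set of pairs $(c,c')$ of characters consecutive in $\pi_t$ with $c\prec_t c'$; $N_{\mathcal{M}}(t)$ is the set of pairs in $N(t)$ whose two characters belong to a common meeting at time step $t$; $N_A(t)=N(t)\setminus N_{\mathcal{M}}(t)$. *)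

From HB Require Import structures.
From mathcomp Require Import all_boot all_order all_algebra.
From mathcomp Require Import reals.
Set Implicit Arguments. Unset Strict Implicit. Unset Printing Implicit Defensive.
Import Order.TTheory GRing.Theory Num.Theory.
Local Open Scope ring_scope.

(* Conventions: the time steps [l] = {1,..,l} are represented by
   0,..,l-1 (the ordinals 'I_l); "t+1" is t.+1.
   - C : finite type of characters
   - M : finite type of meetings, tm m its time step, chm m its character set
   - act c t  <=> t \in A(c)   (so Ac(t) = [pred c | act c t])
   - pi t     : the permutation pi_t of Ac(t), as a duplicate-free sequence *)

Section Storyline.
Variables (l : nat) (C M : finType) (tm : M -> nat) (chm : M -> {set C})
          (act : C -> nat -> bool) (pi : nat -> seq C).

Definition storyline_instance : Prop :=
  (forall c t, act c t -> (t < l)%N) /\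
  (forall c t1 t2 t, act c t1 -> act c t2 -> (t1 <= t <= t2)%N -> act c t) /\
  (forall t, (t < l)%N -> uniq (pi t) /\ forall c, (c \in pi t) = act c t) /\
  (* meetings happen at a time step, and their characters are consecutive in pi_(tm m) *)
  (forall m, (tm m < l)%N /\
     exists i, chm m = [set c in take #|chm m| (drop i (pi (tm m)))]).

Definition consec (t : nat) (c c' : C) : Prop :=
  exists s1 s2, pi t = s1 ++ c :: c' :: s2.

Definition common_meeting (t : nat) (c c' : C) : Prop :=
  exists m : M, tm m = t /\ c \in chm m /\ c' \in chm m.

Definition NM (t : nat) (c c' : C) : Prop := consec t c c' /\ common_meeting t c c'.
Definition NA (t : nat) (c c' : C) : Prop := consec t c c' /\ ~ common_meeting t c c'.

Definition yvar := {p : 'I_l * C | act p.2 p.1}.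
Definition wvar := {p : 'I_l * C | act p.2 p.1 && act p.2 p.1.+1}.

Variable R : realType.

Definition storyline_polyhedron (Delta Dbar : nat) (y : yvar -> R) (w : wvar -> R) : Prop :=
  (forall a b : yvar, ((val a).1 = (val b).1 :> nat) ->
      NM (val a).1 (val a).2 (val b).2 -> y b - y a = Delta%:R) /\
  (forall a b : yvar, ((val a).1 = (val b).1 :> nat) ->
      NA (val a).1 (val a).2 (val b).2 -> y b - y a >= Dbar%:R) /\
  (forall (u : wvar) (a b : yvar), val a = val u ->
      ((val b).1 = (val u).1.+1 :> nat) -> (val b).2 = (val u).2 ->
      y a - y b <= w u /\ y b - y a <= w u) /\
  (forall a : yvar, 0 <= y a).

End Storyline.

Definition extreme_point (R : realType) (Y W : Type)
    (P : (Y -> R) -> (W -> R) -> Prop) (y : Y -> R) (w : W -> R) : Prop :=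
  P y w /\
  forall (y1 y2 : Y -> R) (w1 w2 : W -> R) (lam : R),
    P y1 w1 -> P y2 w2 -> 0 < lam < 1 ->
    (forall i, y i = lam * y1 i + (1 - lam) * y2 i) ->
    (forall j, w j = lam * w1 j + (1 - lam) * w2 j) ->
    (forall i, y1 i = y2 i) /\ (forall j, w1 j = w2 j).

Definition integral (R : realType) (X : Type) (x : X -> R) : Prop :=
  forall i, exists z : int, x i = z%:~R.

From mathcomp Require Import all_boot all_order all_algebra.
From mathcomp Require Import reals ring lra.
Set Implicit Arguments. Unset Strict Implicit. Unset Printing Implicit Defensive.
Import Order.TTheory GRing.Theory Num.Theory.
Local Open Scope ring_scope.

(* At an extreme point every w_{t,c} equals |y_{t+1,c} - y_{t,c}|, for otherwise
   w_{t,c} could be moved both up and down.  If some y_a is not an integer, shift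
   by +eps and by -eps all the y_b that are congruent to y_a modulo 1.  A tight
   constraint (an equality with Delta, a tight inequality with Dbar, or y_b = 0)
   relates values that are congruent modulo 1, or involves a value outside the
   class of y_a, so it is not affected; slack constraints survive for small eps,
   and each |y_{t+1,c} - y_{t,c}| is affine in the shift on [-eps, eps].  Hence
   (y, w) would be the midpoint of two distinct points of P. *)

Section RealFacts.
Variable R : realDomainType.

Lemma normrD_normrB (x e : R) : `|e| <= `|x| -> `|x + e| + `|x - e| = 2 * `|x|.
Proof.
have [x_ge0|x_lt0] := leP 0 x.
  by rewrite (ger0_norm x_ge0) ler_norml => /andP[? ?]; rewrite !ger0_norm; lra.
by rewrite (ltr0_norm x_lt0) ler_norml => /andP[? ?]; rewrite !ler0_norm; lra.
Qed.

Lemma finite_pos_lower_bound (T : finType) (f : T -> R) :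
  exists2 eps : R, 0 < eps & forall i, 0 < f i -> eps <= f i.
Proof.
exists (\big[Order.min/1]_(i | 0 < f i) f i); first exact: lt_bigmin.
by move=> i; apply: bigmin_le_cond.
Qed.

End RealFacts.

Section ClassShift.
Variables (R : archiRealDomainType) (T : Type) (y : T -> R) (x : R).

Definition in_class (a : T) : bool := y a - x \is a Num.int.

Definition class_shift (e : R) (a : T) : R := y a + e * (in_class a)%:R.

Lemma in_class_eq (a b : T) : y b - y a \is a Num.int -> in_class a = in_class b.
Proof.
move=> ab_int; rewrite /in_class; apply/idP/idP => a_int.
  have -> : y b - x = (y b - y a) + (y a - x) by ring.
  by rewrite rpredD.
have -> : y a - x = (y b - x) - (y b - y a) by ring.
by rewrite rpredB.
Qed.

Lemma norm_in_classB (a b : T) : `|(in_class b)%:R - (in_class a)%:R : R| <= 1.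
Proof.
by case: in_class; case: in_class; rewrite ?subrr ?subr0 ?sub0r ?normrN ?normr1 ?normr0.
Qed.

Lemma class_shift_out (e : R) (a : T) : ~~ in_class a -> class_shift e a = y a.
Proof. by move/negbTE; rewrite /class_shift => ->; rewrite mulr0 addr0. Qed.

Lemma norm_class_shift_sub (e : R) (a : T) : `|class_shift e a - y a| <= `|e|.
Proof.
rewrite /class_shift addrC addKr normrM ler_piMr //.
by case: in_class; rewrite ?normr1 ?normr0.
Qed.

Lemma class_shiftB (e : R) (a b : T) :
  class_shift e b - class_shift e a =
  y b - y a + e * ((in_class b)%:R - (in_class a)%:R).
Proof. by rewrite /class_shift; ring. Qed.

Lemma class_shiftB_int (e : R) (a b : T) : y b - y a \is a Num.int ->
  class_shift e b - class_shift e a = y b - y a.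
Proof.
by move=> ab_int; rewrite class_shiftB (in_class_eq ab_int) subrr mulr0 addr0.
Qed.

Lemma norm_class_shiftB_sub (e : R) (a b : T) :
  `|class_shift e b - class_shift e a - (y b - y a)| <= `|e|.
Proof.
by rewrite class_shiftB addrC addKr normrM ler_piMr ?norm_in_classB.
Qed.

Lemma norm_class_shiftB_pm (e : R) (a b : T) :
  (y b - y a \notin Num.int -> `|e| <= `|y b - y a|) ->
  `|class_shift e b - class_shift e a| + `|class_shift (- e) b - class_shift (- e) a|
  = 2 * `|y b - y a|.
Proof.
move=> e_small; have [ab_int|ab_nint] := boolP (y b - y a \is a Num.int).
  by rewrite !class_shiftB_int //; ring.
rewrite !class_shiftB mulNr normrD_normrB //.
by apply: le_trans (e_small ab_nint); rewrite normrM ler_piMr ?norm_in_classB.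
Qed.

End ClassShift.

Lemma extreme_point_midpoint (R : realType) (Y W : Type)
    (P : (Y -> R) -> (W -> R) -> Prop) (y y1 y2 : Y -> R) (w w1 w2 : W -> R) :
  extreme_point P y w -> P y1 w1 -> P y2 w2 ->
  (forall i, y1 i + y2 i = 2 * y i) -> (forall j, w1 j + w2 j = 2 * w j) ->
  (forall i, y1 i = y2 i) /\ (forall j, w1 j = w2 j).
Proof.
move=> [_ ext] P1 P2 y_mid w_mid; apply: (ext _ _ _ _ 2^-1) => //.
- by apply/andP; split; lra.
- by move=> i; have := y_mid i; lra.
- by move=> j; have := w_mid j; lra.
Qed.

Section StorylineExtremePoints.
Variables (R : realType) (l : nat) (C M : finType)
    (tm : M -> nat) (chm : M -> {set C}) (act : C -> nat -> bool)
    (pi : nat -> seq C) (Delta Dbar : nat).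
Hypothesis act_lt : forall c t, act c t -> (t < l)%N.
Local Notation Y := (yvar l act).
Local Notation W := (wvar l act).
Local Notation P := (@storyline_polyhedron l C M tm chm act pi R Delta Dbar).

Lemma wvar_act_src (u : W) : act (val u).2 (val u).1.
Proof. by case/andP: (valP u). Qed.

Lemma wvar_succ_lt (u : W) : ((val u).1.+1 < l)%N.
Proof. by apply: (@act_lt (val u).2); case/andP: (valP u). Qed.

Lemma wvar_act_dst (u : W) : act (val u).2 (Ordinal (wvar_succ_lt u)).
Proof. by case/andP: (valP u). Qed.

Definition wsrc (u : W) : Y := exist _ (val u) (wvar_act_src u).

Definition wdst (u : W) : Y :=
  exist _ (Ordinal (wvar_succ_lt u), (val u).2) (wvar_act_dst u).

Definition jump (y : Y -> R) (u : W) : R := y (wdst u) - y (wsrc u).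

Lemma wvar_endpoints (u : W) (a b : Y) : val a = val u ->
    (val b).1 = (val u).1.+1 :> nat -> (val b).2 = (val u).2 ->
  a = wsrc u /\ b = wdst u.
Proof.
move=> a_u b1_u b2_u; split; apply: val_inj => //=.
case: b b1_u b2_u => [[t c] _] /= t_u ->.
by congr pair; apply: val_inj.
Qed.

Definition layout_feasible (y : Y -> R) : Prop :=
  [/\ forall a b : Y, (val a).1 = (val b).1 :> nat ->
        NM tm chm pi (val a).1 (val a).2 (val b).2 -> y b - y a = Delta%:R,
      forall a b : Y, (val a).1 = (val b).1 :> nat ->
        NA tm chm pi (val a).1 (val a).2 (val b).2 -> Dbar%:R <= y b - y a
    & forall a : Y, 0 <= y a].

Lemma storyline_polyhedronE (y : Y -> R) (w : W -> R) :
  P y w <-> layout_feasible y /\ forall u, `|jump y u| <= w u.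
Proof.
split=> [[eqD [geDbar [jump_le y_ge0]]]|[[eqD geDbar y_ge0] jump_le]].
  split=> [|u]; first by split.
  have [? ?] := jump_le u (wsrc u) (wdst u) erefl erefl erefl.
  by rewrite ler_norml /jump; apply/andP; split; lra.
do 2!split=> //; split=> // u a b a_u b1_u b2_u.
have [-> ->] := wvar_endpoints a_u b1_u b2_u.
by have := jump_le u; rewrite ler_norml /jump => /andP[? ?]; split; lra.
Qed.

Lemma extreme_wE (y : Y -> R) (w : W -> R) :
  extreme_point P y w -> forall u, w u = `|jump y u|.
Proof.
move=> ext u; have [y_feas jump_le] := (storyline_polyhedronE y w).1 ext.1.
apply/eqP; rewrite eq_le jump_le andbT leNgt; apply/negP => jump_lt.
pose s := w u - `|jump y u|.
pose ws (e : R) (j : W) := w j + (if j == u then e else 0).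
have Pws e : `|e| <= s -> P y (ws e).
  move=> e_le; apply/storyline_polyhedronE; split=> // j; rewrite /ws.
  case: eqP => [->|_]; last by rewrite addr0.
  by move: e_le; rewrite ler_norml /s => /andP[? ?]; lra.
have s_gt0 : 0 < s by rewrite subr_gt0.
have s_norm : `|s| <= s by rewrite gtr0_norm.
have s_normN : `|- s| <= s by rewrite normrN.
have w_mid j : ws s j + ws (- s) j = 2 * w j by rewrite /ws; case: eqP => _; lra.
have [_ /(_ u)] := extreme_point_midpoint ext (Pws s s_norm) (Pws (- s) s_normN)
  (fun i => ltac:(lra)) w_mid.
by rewrite /ws eqxx; lra.
Qed.

Definition slack_bound (y : Y -> R) (eps : R) : Prop :=
  [/\ forall a b : Y, y b != y a -> eps <= `|y b - y a|,
      forall a b : Y, Dbar%:R < y b - y a -> eps <= y b - y a - Dbar%:R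
    & forall a : Y, 0 < y a -> eps <= y a].

Lemma exists_slack_bound (y : Y -> R) : exists2 eps, 0 < eps & slack_bound y eps.
Proof.
have [e1 e1_gt0 e1_le] := finite_pos_lower_bound (fun p : Y * Y => `|y p.2 - y p.1|).
have [e2 e2_gt0 e2_le] :=
  finite_pos_lower_bound (fun p : Y * Y => y p.2 - y p.1 - Dbar%:R).
have [e3 e3_gt0 e3_le] := finite_pos_lower_bound y.
exists (Order.min e1 (Order.min e2 e3)); first by rewrite !lt_min e1_gt0 e2_gt0.
split=> [a b ab_neq|a b ab_gt|a a_gt0]; rewrite !ge_min.
- by rewrite (e1_le (a, b)) ?normr_gt0 ?subr_eq0.
- by rewrite (e2_le (a, b)) ?orbT // subr_gt0.
- by rewrite e3_le ?orbT.
Qed.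

Lemma layout_feasible_shift (y : Y -> R) (x e : R) :
  layout_feasible y -> x \notin Num.int -> slack_bound y `|e| ->
  layout_feasible (class_shift y x e).
Proof.
move=> [eqD geDbar y_ge0] x_nint [_ e_ge e_le_y].
split=> [a b ab_t ab_NM|a b ab_t ab_NA|a].
- by rewrite class_shiftB_int eqD ?natr_int.
- have := geDbar a b ab_t ab_NA; rewrite le_eqVlt => /orP[/eqP tight|slack].
    by rewrite class_shiftB_int -tight ?natr_int.
  have := e_ge a b slack; have := norm_class_shiftB_sub y x e a b.
  by rewrite ler_norml => /andP[? ?]; lra.
- have := y_ge0 a; rewrite le_eqVlt => /orP[/eqP ya0|ya_gt0].
    by rewrite class_shift_out -?ya0 // /in_class -ya0 add0r rpredN.
  have := e_le_y a ya_gt0; have := norm_class_shift_sub y x e a.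
  by rewrite ler_norml => /andP[? ?]; lra.
Qed.

Lemma extreme_y_int (y : Y -> R) (w : W -> R) :
  extreme_point P y w -> forall a, y a \is a Num.int.
Proof.
move=> ext a0; apply/negPn/negP => ya0_nint.
have [y_feas _] := (storyline_polyhedronE y w).1 ext.1.
have [eps eps_gt0 y_slack] := exists_slack_bound y.
pose ys e := class_shift y (y a0) e.
have Pys e : `|e| = eps -> P (ys e) (fun u => `|jump (ys e) u|).
  move=> e_eps; apply/storyline_polyhedronE; split=> //.
  by apply: layout_feasible_shift; rewrite ?e_eps.
have w_mid u : `|jump (ys eps) u| + `|jump (ys (- eps)) u| = 2 * w u.
  rewrite (extreme_wE ext) /jump norm_class_shiftB_pm // => ab_nint.
  have [ab_neq _ _] := y_slack; rewrite gtr0_norm // ab_neq //.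
  by apply: contraNneq ab_nint => ->; rewrite subrr rpred0.
have y_mid i : ys eps i + ys (- eps) i = 2 * y i by rewrite /ys /class_shift; ring.
have eps_norm : `|eps| = eps by rewrite gtr0_norm.
have eps_normN : `|- eps| = eps by rewrite normrN.
have [/(_ a0) + _] :=
  extreme_point_midpoint ext (Pys eps eps_norm) (Pys (- eps) eps_normN) y_mid w_mid.
by rewrite /ys /class_shift /in_class subrr rpred0 /= !mulr1; lra.
Qed.

End StorylineExtremePoints.

Theorem proposition1 (R : realType) (l : nat) (C M : finType)
    (tm : M -> nat) (chm : M -> {set C}) (act : C -> nat -> bool)
    (pi : nat -> seq C) (Delta Dbar : nat) :
  storyline_instance l tm chm act pi ->
  forall (y : yvar l act -> R) (w : wvar l act -> R),
    extreme_point (storyline_polyhedron tm chm pi Delta Dbar) y w ->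
    integral y /\ integral w.
Proof.
move=> [act_lt _] y w ext; have y_int := extreme_y_int act_lt ext.
split=> [a|u]; apply/intrP; first exact: y_int.
rewrite (extreme_wE act_lt ext) /jump intr_nat //.
exact/natr_norm_int/rpredB.
Qed.
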